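(* Let $G$ be a finitely generated infinite discrete group with infinite commutator width, $\mathrm{cl}(G)=\infty$. For $K\in\mathbb{Z}_{\ge0}$ let $W_K\subseteq[G,G]$ be the set of elements of $G$ that can be written as a product of at most $K$ commutators. Then for every $K\in\mathbb{Z}_{\ge 0}$ there is no finite subset $F\subseteq G$ such that $G=\bigcup_{t\in F} t\,W_K$; that is, any set $T_K\subseteq G$ with $G=\bigcup_{t\in T_K}tW_K$ must be infinite.
   Context: $[a,b]=aba^{-1}b^{-1}$. For $x\in[G,G]$, $\mathrm{cl}_G(x)$ is the least number of commutators whose product is $x$; the commutator width is $\mathrm{cl}(G)=\sup_{x\in[G,G]}\mathrm{cl}_G(x)\in\mathbb{Z}_{\ge0}\cup\{\infty\}$. *)

From Stdlib Require Import List Arith.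
Import ListNotations.

Record Group := {
  carrier :> Type;
  gmul : carrier -> carrier -> carrier;
  gone : carrier;
  ginv : carrier -> carrier;
  gmulA : forall x y z, gmul x (gmul y z) = gmul (gmul x y) z;
  gmul1l : forall x, gmul gone x = x;
  gmulVl : forall x, gmul (ginv x) x = gone
}.

Section Defs.
Variable G : Group.

Definition commutator (a b : G) : G :=
  gmul G (gmul G (gmul G a b) (ginv G a)) (ginv G b).

Definition gprod (l : list G) : G := fold_right (gmul G) (gone G) l.

(* [G,G]: the subgroup generated by all commutators, i.e. the set of finite
   products of commutators and inverses of commutators *)
Definition in_derived (x : G) : Prop :=
  exists l : list (bool * (G * G)),
    x = gprod (map (fun p : bool * (G * G) => let c := commutator (fst (snd p)) (snd (snd p)) in
                             if fst p then c else ginv G c) l).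

Definition W (K : nat) (x : G) : Prop :=
  exists l : list (G * G), length l <= K /\
    x = gprod (map (fun p : G * G => commutator (fst p) (snd p)) l).

Definition infinite_commutator_width : Prop :=
  forall n : nat, exists x : G, in_derived x /\ ~ W n x.

Definition finitely_generated : Prop :=
  exists S : list G, forall g : G,
    exists l : list (bool * G),
      (forall p : bool * G, In p l -> In (snd p) S) /\
      g = gprod (map (fun p : bool * G => if fst p then snd p else ginv G (snd p)) l).

Definition infinite_group : Prop :=
  forall l : list G, exists g : G, ~ In g l.

End Defs.

(* If G = F W_K with F finite, the elements of F lying in [G,G] have commutator
   length at most some N. Any x in [G,G] is x = t w with w in W_K, so
   t = x w^-1 lies in [G,G] and x = t w is a product of at most N + K
   commutators, i.e. cl(G) <= N + K. *)
From Stdlib Require Import List Lia Classical.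

Section GroupFacts.
Variable G : Group.
Local Notation "x * y" := (gmul G x y).
Local Notation "x ^-1" := (ginv G x) (at level 2).
Local Notation one := (gone G).

Lemma mulgV (x : G) : x * x^-1 = one.
Proof.
  rewrite <- (gmul1l G (x * x^-1)), <- (gmulVl G x^-1) at 1.
  rewrite <- gmulA, (gmulA G x^-1 x x^-1), gmulVl, gmul1l.
  apply gmulVl.
Qed.

Lemma mulg1 (x : G) : x * one = x.
Proof. rewrite <- (gmulVl G x), gmulA, mulgV, gmul1l. reflexivity. Qed.

Lemma invg_unique (y z : G) : y * z = one -> y = z^-1.
Proof.
  intro Hyz. rewrite <- (mulg1 y), <- (mulgV z), gmulA, Hyz, gmul1l.
  reflexivity.
Qed.

Lemma invg1 : one^-1 = one.
Proof. symmetry. apply invg_unique, gmul1l. Qed.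

Lemma invgM (a b : G) : (a * b)^-1 = b^-1 * a^-1.
Proof.
  symmetry. apply invg_unique.
  rewrite <- gmulA, (gmulA G a^-1 a b), gmulVl, gmul1l, gmulVl.
  reflexivity.
Qed.

Lemma invgK (a : G) : (a^-1)^-1 = a.
Proof. symmetry. apply invg_unique, mulgV. Qed.

Lemma invg_commutator (a b : G) : (commutator G a b)^-1 = commutator G b a.
Proof. unfold commutator. rewrite !invgM, !invgK, !gmulA. reflexivity. Qed.

Lemma gprod_app (l1 l2 : list G) :
  gprod G (l1 ++ l2) = gprod G l1 * gprod G l2.
Proof.
  induction l1 as [|a l1 IH]; simpl.
  - rewrite gmul1l. reflexivity.
  - rewrite IH, gmulA. reflexivity.
Qed.

Lemma W_mono (n m : nat) (x : G) : n <= m -> W G n x -> W G m x.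
Proof. intros Hnm [l [Hl ->]]. exists l. split; [lia | reflexivity]. Qed.

Lemma W_mul (n m : nat) (x y : G) : W G n x -> W G m y -> W G (n + m) (x * y).
Proof.
  intros [l [Hl ->]] [l' [Hl' ->]]. exists (l ++ l'). split.
  - rewrite length_app. lia.
  - rewrite map_app, gprod_app. reflexivity.
Qed.

Lemma W_inv (n : nat) (x : G) : W G n x -> W G n x^-1.
Proof.
  intros [l [Hl ->]].
  exists (rev (map (fun p : G * G => (snd p, fst p)) l)). split.
  - rewrite length_rev, length_map. exact Hl.
  - clear Hl. induction l as [|[a b] l IH]; simpl.
    + apply invg1.
    + rewrite invgM, IH, map_app, gprod_app; simpl.
      rewrite mulg1, invg_commutator. reflexivity.
Qed.

Lemma in_derived_W (x : G) : in_derived G x -> exists n, W G n x.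
Proof.
  intros [l ->]. exists (length l).
  exists (map (fun p : bool * (G * G) =>
                 if fst p then snd p else (snd (snd p), fst (snd p))) l).
  split; [rewrite length_map; reflexivity |].
  induction l as [|[[|] [a b]] l IH]; simpl; f_equal; auto.
  apply invg_commutator.
Qed.

(* Excluded middle decides which elements of F have finite commutator length. *)
Lemma W_bound_list (F : list G) :
  exists N, forall t, In t F -> (exists n, W G n t) -> W G N t.
Proof.
  induction F as [|a F [N HN]].
  - exists 0. intros t [].
  - destruct (classic (exists n, W G n a)) as [[n Hn] | Hna].
    + exists (max N n). intros t [<- | Ht] Ht_fin.
      * apply (W_mono n); [lia | exact Hn].
      * apply (W_mono N); [lia | auto].
    + exists N. intros t [<- | Ht] Ht_fin; [contradiction | auto].
Qed.

Lemma finite_cover_bounds_W (K : nat) (F : list G) :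
  (forall g : G, exists t, In t F /\ exists w, W G K w /\ g = t * w) ->
  exists N, forall x, in_derived G x -> W G N x.
Proof.
  intros Hcover. destruct (W_bound_list F) as [N HN].
  exists (N + K). intros x Hx.
  destruct (Hcover x) as [t [HtF [w [Hw ->]]]].
  apply W_mul; [| exact Hw].
  apply HN; [exact HtF |].
  destruct (in_derived_W _ Hx) as [n Hn].
  exists (n + K).
  replace t with ((t * w) * w^-1)
    by (rewrite <- gmulA, mulgV, mulg1; reflexivity).
  apply W_mul; [exact Hn | apply W_inv, Hw].
Qed.

End GroupFacts.

Theorem mainTheorem2 (G : Group) :
  finitely_generated G -> infinite_group G -> infinite_commutator_width G ->
  forall K : nat,
    ~ (exists F : list G,
         forall g : G, exists t : G, In t F /\
           exists w : G, W G K w /\ g = gmul G t w).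
Proof.
  intros _ _ Hwidth K [F Hcover].
  destruct (finite_cover_bounds_W G K F Hcover) as [N HN].
  destruct (Hwidth N) as [x [Hx HxN]].
  exact (HxN (HN x Hx)).
Qed.
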